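(* Let $n\ge 1$, $k\ge 1$, and let $s_1,\dots,s_k$ be nonnegative integers. There are $k$ players who independently each open one cereal box per time step; each box contains one of $n$ coupon types chosen uniformly at random, independently of everything else. Player $i$ is currently missing $s_i$ of the $n$ coupon types. Let $X_i(s_i)$ be the number of boxes player $i$ must open until they have all $n$ types, and let $$M(s_1,\dots,s_k):=\mathbb{E}\left[\max\{X_1(s_1),\dots,X_k(s_k)\}\right]$$ be the expected number of boxes required for the slowest player to complete the collection. Then, with $S:=\sum_{i=1}^k s_i$, $$M(s_1,\dots,s_k)=nH(S)-\frac{\left(H(S)-1\right)\sum_{i<j}s_is_j}{S(S-1)}+o(1).$$
   Context: $H(m)=\sum_{j=1}^m\frac1j$ denotes the $m$-th harmonic number. The term $o(1)$ denotes a quantity tending to $0$ as $n\to\infty$ with $k$ and $s_1,\dots,s_k$ fixed. *)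

From HB Require Import structures.
From mathcomp Require Import all_boot all_order all_algebra.
From mathcomp Require Import all_classical all_reals all_analysis.
Set Implicit Arguments. Unset Strict Implicit. Unset Printing Implicit Defensive.
Import Order.TTheory GRing.Theory Num.Theory.
Local Open Scope ring_scope.

Definition harmonicH (R : realType) (m : nat) : R :=
  \sum_(1 <= j < m.+1) (j%:R)^-1.

(* Outcome of the first t boxes of all k players: F i u = coupon type found by
   player i in box number u (u < t).  Player i is missing the s i types
   {0, ..., s i - 1}.  The event "every player is complete after t boxes",
   i.e. max_i X_i(s_i) <= t. *)
Definition all_complete (n k : nat) (s : 'I_k -> nat) (t : nat)
    (F : {ffun 'I_k -> {ffun 'I_t -> 'I_n}}) : bool :=
  [forall i : 'I_k, forall j : 'I_n,
     (nat_of_ord j < s i)%N ==> [exists u : 'I_t, F i u == j]].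

Definition prob_max_le (R : realType) (n k : nat) (s : 'I_k -> nat) (t : nat) : R :=
  #|[set F : {ffun 'I_k -> {ffun 'I_t -> 'I_n}} | all_complete s F]|%:R / #|{: {ffun 'I_k -> {ffun 'I_t -> 'I_n}}}|%:R.

(* M(s_1,...,s_k) = E[max_i X_i(s_i)] = sum_{t >= 0} P(max > t)
   (tail-sum formula for a nonnegative integer-valued random variable). *)
Definition expected_max (R : realType) (n k : nat) (s : 'I_k -> nat) : R :=
  limn (fun N : nat => \sum_(0 <= t < N) (1 - prob_max_le R n s t)).

Arguments harmonicH R m : clear implicits.
Arguments prob_max_le R n {k} s t.
Arguments expected_max R n {k} s.

(* By inclusion-exclusion over the set A
   of missed coupons, P(max_i X_i <= t) = sum_A (-1)^|A| q_n(A)^t with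
   q_n(A) = prod_i (1 - a_i/n), where a_i is the number of coupons of A that
   belong to player i; summing the tails gives M = - sum_A (-1)^|A| / (1 - q_n(A)).
   For fixed A, 1/(1 - q_n(A)) = n/|A| + e(A)/|A|^2 + o(1), where
   e(A) = sum_(i<j) a_i a_j counts the pairs of coupons of A that belong to
   different players.  Writing e(A) as a sum over such pairs leaves alternating
   sums, over all A (containing a given pair), of functions of |A|; the identities
     sum_m C(N,m) (-1)^m / (m + x) = N! / (x (x+1) ... (x+N))
   and its analogue with (m + x)^2 evaluate them to -H(S) and to
   (H(S) - 1) / (S (S - 1)) per pair. *)

From HB Require Import structures.
From mathcomp Require Import all_boot all_order all_algebra.
From mathcomp Require Import all_classical all_reals all_analysis.
(* Re-imported so that set0, setT, subsetP, ... denote the finite sets of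
   finset rather than the classical sets of classical_sets. *)
From mathcomp Require Import fintype finset.
From mathcomp Require Import ring.
Import Order.TTheory GRing.Theory Num.Theory.
Import numFieldNormedType.Exports.
Local Open Scope ring_scope.

Section AlternatingBinomialSums.
Variable R : numFieldType.

Definition rising (x : R) (m : nat) : R := \prod_(j < m) (x + j%:R).

Lemma rising_gt0 x m : 0 < x -> 0 < rising x m.
Proof.
move=> x_gt0; apply: prodr_gt0 => j _.
by apply: lt_le_trans x_gt0 _; rewrite lerDl.
Qed.

Lemma risingS x m : rising x m.+1 = rising x m * (x + m%:R).
Proof. by rewrite /rising big_ord_recr. Qed.

Lemma rising_shift x m : x * rising (x + 1) m = rising x m.+1.
Proof.
rewrite /rising [RHS]big_ord_recl addr0; congr (_ * _).
by apply: eq_bigr => j _; rewrite /bump /= natrD addrA.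
Qed.

Lemma rising1 m : rising 1 m = m`!%:R.
Proof.
elim: m => [|m IHm]; first by rewrite /rising big_ord0.
by rewrite risingS IHm factS natrM mulrC addrC natr1.
Qed.

Lemma sum_binomS N (f : nat -> R) :
  \sum_(m < N.+2) 'C(N.+1, m)%:R * f m =
  \sum_(m < N.+1) 'C(N, m)%:R * (f m + f m.+1).
Proof.
rewrite big_ord_recl bin0 /=.
under eq_bigr do rewrite /bump /= binS natrD mulrDl.
rewrite big_split /= addrA.
under [RHS]eq_bigr do rewrite mulrDr.
rewrite big_split /= [in RHS]big_ord_recl bin0; congr (_ + _).
by rewrite big_ord_recr /= bin_small // mul0r addr0.
Qed.

Definition alt_binom_sum (f : R -> R) (N : nat) (x : R) : R :=
  \sum_(m < N.+1) 'C(N, m)%:R * ((-1) ^+ m * f (m%:R + x)).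

Lemma alt_binom_sumS f N x :
  alt_binom_sum f N.+1 x = alt_binom_sum f N x - alt_binom_sum f N (x + 1).
Proof.
rewrite /alt_binom_sum (sum_binomS N (fun m => (-1) ^+ m * f (m%:R + x))) -sumrB.
apply: eq_bigr => m _; rewrite mulrDr; congr (_ + _).
by rewrite exprS mulN1r mulNr mulrN -natr1 -addrA [1 + x]addrC.
Qed.

Lemma rising_shiftE x m : 0 < x ->
  rising (x + 1) m.+1 = rising x m.+1 * (x + m.+1%:R) / x.
Proof.
by move=> x_gt0; rewrite -risingS -(rising_shift x) mulrC mulKf // gt_eqF.
Qed.

Lemma alt_binom_sum_inv N x : 0 < x ->
  alt_binom_sum GRing.inv N x = N`!%:R / rising x N.+1.
Proof.
elim: N x => [|N IHN] x x_gt0.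
  by rewrite /alt_binom_sum /rising !big_ord1 add0r addr0 mul1r.
have x1_gt0 : 0 < x + 1 by rewrite addr_gt0.
have xN_gt0 : 0 < x + N.+1%:R by rewrite addr_gt0.
have r_gt0 := @rising_gt0 x N.+1 x_gt0.
rewrite alt_binom_sumS !IHN // rising_shiftE // [rising x N.+2]risingS factS natrM.
rewrite -natr1 in xN_gt0 *; by field; rewrite !gt_eqF.
Qed.

Lemma sum_inv_shift (x : R) N :
  \sum_(j < N.+1) (x + 1 + j%:R)^-1 =
  \sum_(j < N.+1) (x + j%:R)^-1 + (x + N.+1%:R)^-1 - x^-1.
Proof.
rewrite big_ord_recr /= [in RHS]big_ord_recl /= addr0 [RHS]addrAC [x^-1 + _]addrC addrK.
rewrite -natr1 addrA [x + N%:R + 1]addrAC; congr (_ + _).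
by apply: eq_bigr => j _; rewrite /bump /= natrD addrA.
Qed.

Lemma alt_binom_sum_inv_sqr N x : 0 < x ->
  alt_binom_sum (fun y => (y ^+ 2)^-1) N x =
  N`!%:R / rising x N.+1 * \sum_(j < N.+1) (x + j%:R)^-1.
Proof.
elim: N x => [|N IHN] x x_gt0.
  by rewrite /alt_binom_sum /rising !big_ord1 /= add0r addr0 !mul1r expr2 invfM.
have x1_gt0 : 0 < x + 1 by rewrite addr_gt0.
have xN_gt0 : 0 < x + N.+1%:R by rewrite addr_gt0.
have r_gt0 := @rising_gt0 x N.+1 x_gt0.
rewrite alt_binom_sumS !IHN // rising_shiftE // sum_inv_shift.
rewrite [rising x N.+2]risingS factS natrM [in RHS]big_ord_recr /=.
rewrite -natr1 in xN_gt0 *; by field; rewrite !gt_eqF.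
Qed.

End AlternatingBinomialSums.

Arguments rising {R}.
Arguments alt_binom_sum {R}.

Section HarmonicNumbers.
Variable R : realType.

Lemma harmonicS m : harmonicH R m.+1 = harmonicH R m + m.+1%:R^-1.
Proof. by rewrite /harmonicH big_nat_recr. Qed.

(* The term m = 0 of the alternating sum is 0^-1 = 0. *)
Lemma harmonic_alt_binom_sum m : harmonicH R m = - alt_binom_sum GRing.inv m 0.
Proof.
elim: m => [|m IHm].
  by rewrite /harmonicH big_geq // /alt_binom_sum big_ord1 addr0 invr0 !mulr0 oppr0.
rewrite harmonicS IHm alt_binom_sumS add0r (alt_binom_sum_inv _ m _ ltr01) rising1.
by rewrite opprB addrC factS natrM invfM mulrC mulfVK // pnatr_eq0 -lt0n fact_gt0.
Qed.

Lemma alt_binom_sum_inv_sqr_at2 N :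
  alt_binom_sum (fun y => (y ^+ 2)^-1) N 2 =
  (harmonicH R N.+2 - 1) / (N.+2%:R * (N.+2%:R - 1)).
Proof.
have rising2 : rising 2 N.+1 = N.+2`!%:R :> R.
  by rewrite -rising1 -(rising_shift _ 1) mul1r.
have harmonic_tail : \sum_(j < N.+1) (2 + j%:R)^-1 = harmonicH R N.+2 - 1 :> R.
  elim: {rising2} N => [|N IHN].
    by rewrite big_ord1 !harmonicS /harmonicH big_geq // add0r addr0 invr1 addrC addKr.
  by rewrite big_ord_recr /= IHN [harmonicH R N.+3]harmonicS addrAC -natrD add2n.
have -> := @alt_binom_sum_inv_sqr R N 2 (ltr0Sn _ 1).
rewrite rising2 harmonic_tail !factS !natrM -natr1.
by field; rewrite -?natr1 ?pnatr_eq0 -?lt0n ?fact_gt0 // ?gt_eqF.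
Qed.

End HarmonicNumbers.

Section SubsetSums.
Variables (R : ringType) (T : finType).

Lemma sum_subset_card (V : {set T}) (g : nat -> R) :
  \sum_(A : {set T} | A \subset V) g #|A| =
  \sum_(m < #|V|.+1) 'C(#|V|, m)%:R * g m.
Proof.
rewrite (partition_big (fun A : {set T} => inord #|A| : 'I_#|V|.+1) xpredT) //=.
apply: eq_bigr => m _.
have cardE (A : {set T}) : A \subset V -> (inord #|A| == m :> 'I_#|V|.+1) = (#|A| == m).
  by move=> AV; rewrite -val_eqE /= inordK // ltnS subset_leq_card.
transitivity (\sum_(A in [set A : {set T} | A \subset V & #|A| == m]) g m).
  apply: eq_big => A.
    by rewrite inE; case AV: (A \subset V); rewrite //= cardE.
  by case/andP=> AV; rewrite cardE // => /eqP ->.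
by rewrite sumr_const cards_draws mulr_natl.
Qed.

Lemma sum_set_card (g : nat -> R) :
  \sum_(A : {set T}) g #|A| = \sum_(m < #|T|.+1) 'C(#|T|, m)%:R * g m.
Proof. by rewrite -cardsT -sum_subset_card; apply: eq_bigl => A; rewrite subsetT. Qed.

Lemma sum_set2_card (x y : T) (g : nat -> R) : x != y ->
  \sum_(A : {set T} | (x \in A) && (y \in A)) g #|A| =
  \sum_(m < (#|T| - 2).+1) 'C(#|T| - 2, m)%:R * g m.+2.
Proof.
move=> xy; set P := [set x; y].
have cardP : #|P| = 2 by rewrite cards2 xy.
rewrite (reindex_onto (fun B => B :|: P) (fun A => A :\: P)); last first.
  by move=> A /andP[xA yA]; rewrite setUC setDE setUIr setUCr setIT; apply/setUidPr;
    rewrite subUset !sub1set xA yA.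
rewrite (_ : (#|T| - 2)%N = #|~: P|); last by rewrite [RHS]cardsCs setCK cardP.
rewrite -(sum_subset_card (~: P) (fun m => g m.+2)); apply: eq_big => B.
  rewrite !inE !eqxx !orbT /= setDUl setDv setU0 -disjoints_subset.
  apply/eqP/idP => [<- | /setDidPl //].
  by rewrite disjoints_subset setDE subsetIr.
move=> /andP[_ /eqP]; rewrite setDUl setDv setU0 => /setDidPl BP.
by rewrite cardsU (disjoint_setI0 BP) cards0 subn0 cardP addn2.
Qed.

Lemma sum_subset_sign (B : {set T}) :
  \sum_(A : {set T} | A \subset B) (-1) ^+ #|A| = (B == set0)%:R :> R.
Proof.
rewrite sum_subset_card -cards_eq0 -expr0n -[X in X ^+ _](subrr (1 : R)).
rewrite (exprDn_comm _ (commrN1 1)); apply: eq_bigr => m _.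
by rewrite expr1n mul1r mulr_natl.
Qed.

End SubsetSums.

Arguments sum_set_card {R T} g.
Arguments sum_set2_card {R T x y} g.

Section SignedSubsetSums.
Variables (R : realType) (T : finType).

Lemma sum_sign_inv_card :
  \sum_(A : {set T}) (-1) ^+ #|A| / #|A|%:R = - harmonicH R #|T|.
Proof.
rewrite (sum_set_card (fun m => (-1) ^+ m / m%:R)) harmonic_alt_binom_sum opprK.
by apply: eq_bigr => m _; rewrite addr0.
Qed.

Lemma sum_sign_sqr_set2 (x y : T) : x != y ->
  \sum_(A : {set T} | (x \in A) && (y \in A)) (-1) ^+ #|A| / #|A|%:R ^+ 2 =
  (harmonicH R #|T| - 1) / (#|T|%:R * (#|T|%:R - 1)).
Proof.
move=> xy; rewrite (sum_set2_card (fun m => (-1) ^+ m / m%:R ^+ 2) xy).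
have T2 : (2 <= #|T|)%N by have := cards2 x y; rewrite xy => <-; apply: max_card.
rewrite -[in RHS](subnK T2) addn2 -alt_binom_sum_inv_sqr_at2; apply: eq_bigr => m _.
have sign2 : (-1) ^+ m.+2 = (-1) ^+ m :> R by rewrite !exprS !mulN1r opprK.
by rewrite sign2 -[m.+2]addn2 natrD.
Qed.

Lemma sum_sign_sqr_pairs (D : {set T * T}) : {in D, forall p, p.1 != p.2} ->
  \sum_(A : {set T}) #|[set p in D | (p.1 \in A) && (p.2 \in A)]|%:R *
                     ((-1) ^+ #|A| / #|A|%:R ^+ 2) =
  #|D|%:R * ((harmonicH R #|T| - 1) / (#|T|%:R * (#|T|%:R - 1))).
Proof.
move=> D_neq.
under eq_bigr do rewrite -sum1dep_card natr_sum mulr_suml.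
rewrite (exchange_big_dep (mem D)) /=; last by move=> A p _ /and3P[].
rewrite mulr_natl -sumr_const; apply: eq_bigr => p pD.
rewrite -(sum_sign_sqr_set2 _ _ (D_neq p pD)).
by apply: eq_big => [A | A _]; rewrite ?pD ?mul1r.
Qed.

End SignedSubsetSums.

Arguments sum_sign_sqr_pairs {R T D}.

Lemma sqr_sum_sub_sum_sqr (R : comRingType) k (b : 'I_k -> R) :
  (\sum_(i < k) b i) ^+ 2 - \sum_(i < k) b i ^+ 2 =
  2 * \sum_(i < k) \sum_(j < k | (i < j)%N) b i * b j.
Proof.
have offdiag : (\sum_(i < k) b i) ^+ 2 - \sum_(i < k) b i ^+ 2 =
    \sum_(i < k) \sum_(j < k | j != i) b i * b j.
  rewrite expr2 mulr_suml -sumrB; apply: eq_bigr => i _.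
  by rewrite mulr_sumr (bigD1 i) //= expr2 addrAC subrr add0r.
have lt_gt : \sum_(i < k) \sum_(j < k | j != i) b i * b j =
    \sum_(i < k) \sum_(j < k | (i < j)%N) b i * b j +
    \sum_(i < k) \sum_(j < k | (j < i)%N) b i * b j.
  rewrite -big_split; apply: eq_bigr => i _; rewrite (bigID (fun j : 'I_k => (i < j)%N)) /=.
  by congr (_ + _); apply: eq_bigl => j; rewrite -val_eqE; case: ltngtP.
have swap : \sum_(i < k) \sum_(j < k | (j < i)%N) b i * b j =
    \sum_(i < k) \sum_(j < k | (i < j)%N) b i * b j.
  rewrite (exchange_big_dep xpredT) //=; apply: eq_bigr => i _.
  by apply: eq_bigr => j _; rewrite mulrC.
by rewrite offdiag lt_gt swap mulr_natl mulr2n.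
Qed.

Section Colouring.
Variables (T : finType) (k : nat) (col : T -> 'I_k).

Definition card_fiber (A : {set T}) (i : 'I_k) : nat := #|[set x in A | col x == i]|.

Definition cross_pairs (A : {set T}) : {set T * T} :=
  [set p | [&& p.1 \in A, p.2 \in A & (col p.1 < col p.2)%N]].

Lemma card_fiber0 i : card_fiber set0 i = 0.
Proof. by apply: eq_card0 => x; rewrite !inE. Qed.

Lemma card_fiberT_ge A i : (card_fiber A i <= card_fiber setT i)%N.
Proof. by apply: subset_leq_card; apply/subsetP => x; rewrite !inE => /andP[_ ->]. Qed.

Lemma cross_pairsE A :
  cross_pairs A = [set p in cross_pairs setT | (p.1 \in A) && (p.2 \in A)].
Proof. by apply/setP => p; rewrite !inE /= [RHS]andbC andbA. Qed.

Lemma cross_pairs_neq : {in cross_pairs setT, forall p, p.1 != p.2}.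
Proof. by move=> p; rewrite inE => /and3P[_ _]; apply: contraTneq => ->; rewrite ltnn. Qed.

Variable R : ringType.

Lemma sum_fiber (A : {set T}) (F : 'I_k -> R) :
  \sum_(x in A) F (col x) = \sum_(i < k) (card_fiber A i)%:R * F i.
Proof.
rewrite (partition_big col xpredT) //=; apply: eq_bigr => i _.
rewrite /card_fiber mulr_natl -sumr_const.
by apply: eq_big => [x | x /andP[_ /eqP ->]] //; rewrite inE.
Qed.

Lemma sum_card_fiber (A : {set T}) : \sum_(i < k) (card_fiber A i)%:R = #|A|%:R :> R.
Proof.
by rewrite -sumr_const (sum_fiber A (fun=> 1)); apply: eq_bigr => i _; rewrite mulr1.
Qed.

Lemma card_cross_pairs (A : {set T}) :
  #|cross_pairs A|%:R =
  \sum_(i < k) \sum_(j < k | (i < j)%N) (card_fiber A i)%:R * (card_fiber A j)%:R :> R.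
Proof.
rewrite -sumr_const (eq_bigl _ _ (fun p => in_set _ p)).
rewrite -(pair_big_dep (fun x => x \in A) (fun x y => (y \in A) && (col x < col y)%N)
  (fun _ _ => 1)) /=.
under eq_bigr => x _.
  rewrite big_mkcondr (eq_bigr (fun y => ((col x < col y)%N)%:R)); last first.
    by move=> y _; case: ltnP.
  rewrite (sum_fiber A (fun j => ((col x < j)%N)%:R)).
  over.
rewrite (sum_fiber A (fun i => \sum_j (card_fiber A j)%:R * ((i < j)%N)%:R)).
apply: eq_bigr => i _; rewrite mulr_sumr [RHS]big_mkcond; apply: eq_bigr => j _.
by case: ltnP; rewrite ?mulr1 ?mulr0.
Qed.

End Colouring.

Arguments card_fiber {T k} col A i.
Arguments cross_pairs {T k} col A.
Arguments card_fiber0 {T k col} i.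
Arguments card_fiberT_ge {T k col} A i.
Arguments cross_pairs_neq {T k} col.

Section ProductExpansion.
Variables (R : realType) (I : Type) (b : I -> R).
Local Open Scope classical_set_scope.

Lemma cvgn_inv : (fun n : nat => (n%:R : R)^-1) @ \oo --> 0.
Proof. by rewrite -cvg_shiftS; exact: cvg_harmonic. Qed.

Local Notation prod_miss r n := (\prod_(i <- r) (1 - b i / n%:R)).

Definition esym2 (r : seq I) : R :=
  ((\sum_(i <- r) b i) ^+ 2 - \sum_(i <- r) b i ^+ 2) / 2.

Lemma cvgn_prod_miss r : (fun n : nat => prod_miss r n) @ \oo --> (1 : R).
Proof.
rewrite [X in _ --> X](_ : 1 = \prod_(i <- r) (1 - b i * 0)); last first.
  by rewrite big1 // => i _; rewrite mulr0 subr0.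
apply: cvg_big => [|i _]; first exact: mul_continuous.
by apply: cvgB; [exact: cvg_cst | apply: cvgM; [exact: cvg_cst | exact: cvgn_inv]].
Qed.

Lemma cvgn_mul_one_sub_prod r :
  (fun n : nat => n%:R * (1 - prod_miss r n)) @ \oo --> \sum_(i <- r) b i.
Proof.
elim: r => [|j r IHr].
  by rewrite big_nil; under eq_cvg do rewrite big_nil subrr mulr0; exact: cvg_cst.
have lim : (fun n : nat => b j * prod_miss r n + n%:R * (1 - prod_miss r n))
    @ \oo --> b j * 1 + \sum_(i <- r) b i.
  by apply: cvgD => //; apply: cvgM; [exact: cvg_cst | exact: cvgn_prod_miss].
rewrite mulr1 in lim; rewrite big_cons.
apply: cvg_trans lim; apply: near_eq_cvg; near=> n.
have n_neq0 : n%:R != 0 :> R by rewrite pnatr_eq0 -lt0n; near: n; exact: nbhs_infty_gt.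
by rewrite big_cons; field.
Unshelve. all: by end_near.
Qed.

Lemma cvgn_sqr_prod r :
  (fun n : nat => n%:R ^+ 2 * (prod_miss r n - 1 + (\sum_(i <- r) b i) / n%:R))
    @ \oo --> esym2 r.
Proof.
elim: r => [|j r IHr].
  rewrite /esym2 !big_nil expr2 mulr0 subrr mul0r.
  by under eq_cvg do rewrite big_nil subrr mul0r addr0 mulr0; exact: cvg_cst.
have lim : (fun n : nat => n%:R ^+ 2 * (prod_miss r n - 1 + (\sum_(i <- r) b i) / n%:R)
      + b j * (n%:R * (1 - prod_miss r n))) @ \oo --> esym2 r + b j * \sum_(i <- r) b i.
  by apply: cvgD => //; apply: cvgM; [exact: cvg_cst | exact: cvgn_mul_one_sub_prod].
rewrite (_ : _ + _ = esym2 (j :: r)) in lim; last by rewrite /esym2 !big_cons; field.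
apply: cvg_trans lim; apply: near_eq_cvg; near=> n.
have n_neq0 : n%:R != 0 :> R by rewrite pnatr_eq0 -lt0n; near: n; exact: nbhs_infty_gt.
by rewrite !big_cons; field.
Unshelve. all: by end_near.
Qed.

Lemma cvgn_inv_one_sub_prod r : \sum_(i <- r) b i != 0 ->
  (fun n : nat => (1 - prod_miss r n)^-1 - n%:R / \sum_(i <- r) b i
                  - esym2 r / (\sum_(i <- r) b i) ^+ 2) @ \oo --> 0.
Proof.
set a := \sum_(i <- r) b i => a_neq0.
have first_order : (fun n : nat => n%:R * (1 - prod_miss r n)) @ \oo --> a.
  exact: cvgn_mul_one_sub_prod.
have lim : (fun n : nat => n%:R ^+ 2 * (prod_miss r n - 1 + a / n%:R)
      * (n%:R * (1 - prod_miss r n) * a)^-1 - esym2 r / a ^+ 2)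
    @ \oo --> esym2 r * (a * a)^-1 - esym2 r / a ^+ 2.
  apply: cvgB; last exact: cvg_cst.
  apply: cvgM; first exact: cvgn_sqr_prod.
  by apply: cvgV; [rewrite mulf_neq0 | apply: cvgM; [|exact: cvg_cst]].
rewrite expr2 subrr in lim; apply: cvg_trans lim; apply: near_eq_cvg; near=> n.
have n_neq0 : n%:R != 0 :> R by rewrite pnatr_eq0 -lt0n; near: n; exact: nbhs_infty_gt.
have : n%:R * (1 - prod_miss r n) != 0.
  by near: n; apply: cvgr_neq0 first_order a_neq0.
rewrite mulf_eq0 negb_or n_neq0 /= => q_neq1.
by field; rewrite n_neq0 q_neq1 a_neq0.
Unshelve. all: by end_near.
Qed.

End ProductExpansion.

Arguments cvgn_inv_one_sub_prod {R I} b {r}.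

Section InclusionExclusion.
Variables (R : realType) (n k : nat) (s : 'I_k -> nat).
Hypothesis s_le : forall i, (s i <= n)%N.

(* The coupon (i, j) is coupon type j, still missing to player i. *)
Local Notation coupons := {i : 'I_k & 'I_(s i)}.
Local Notation outcome t := {ffun 'I_k -> {ffun 'I_t -> 'I_n}}.

Definition coupon (x : coupons) : 'I_n := widen_ord (s_le (tag x)) (tagged x).

Definition missed {t} (F : outcome t) : {set coupons} :=
  [set x | [forall u, F (tag x) u != coupon x]].

Definition miss_prob (A : {set coupons}) : R :=
  \prod_(i < k) (1 - (card_fiber tag A i)%:R / n%:R).

Lemma card_fiber_tagT i : card_fiber tag [set: coupons] i = s i.
Proof.
rewrite /card_fiber -[RHS](card_ord (s i)).
rewrite (bij_eq_card (@tag_with_bij _ (fun i => 'I_(s i)) i)) card_sig.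
by apply: eq_card => x; rewrite !inE.
Qed.

Lemma card_coupons : #|{: coupons}| = (\sum_(i < k) s i)%N.
Proof.
by rewrite card_tagged sumnE big_map big_enum; apply: eq_bigr => i _; rewrite card_ord.
Qed.

Lemma card_fiber_le (A : {set coupons}) i : (card_fiber tag A i <= n)%N.
Proof. by rewrite (leq_trans (card_fiberT_ge A i)) // card_fiber_tagT. Qed.

Lemma all_completeE t (F : outcome t) : all_complete s F = (missed F == set0).
Proof.
apply/forallP/eqP => [complete | missed0 i].
  apply/setP => x; rewrite !inE; apply/negbTE; rewrite negb_forall.
  have /forallP/(_ (coupon x)) := complete (tag x).
  by rewrite /= ltn_ord /= => /existsP[u /eqP Fu]; apply/existsP; exists u; rewrite Fu negbK.
apply/forallP => j; apply/implyP => j_lt.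
have : Tagged (fun i => 'I_(s i)) (Ordinal j_lt) \notin missed F by rewrite missed0 inE.
rewrite inE negb_forall => /existsP[u]; rewrite negbK => /eqP Fu.
by apply/existsP; exists u; rewrite Fu; apply/eqP/val_inj.
Qed.

Lemma card_sup_missed t (A : {set coupons}) :
  #|[set F : outcome t | A \subset missed F]| =
  (\prod_(i < k) (n - card_fiber tag A i) ^ t)%N.
Proof.
pose hit i : {set 'I_n} := [set coupon x | x in [set x in A | tag x == i]].
have card_hit i : #|hit i| = card_fiber tag A i.
  apply: card_in_imset => -[i1 j1] [i2 j2]; rewrite !inE /= => /andP[_ /eqP E1] /andP[_ /eqP E2].
  by subst i1 i2 => /(congr1 val) /= /val_inj ->.
have avoidE (F : outcome t) :
    (A \subset missed F) = [forall i, F i \in ffun_on (~: hit i)].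
  apply/subsetP/forallP => [sub_missed i | avoid x xA].
    apply/ffun_onP => u; rewrite inE; apply/imsetP => -[x]; rewrite inE => /andP[xA /eqP <-].
    by move=> /eqP; apply/negP; move: (sub_missed x xA); rewrite inE => /forallP.
  rewrite inE; apply/forallP => u; have := ffun_onP (avoid (tag x)) u.
  by rewrite inE; apply: contraNneq => ->; apply/imsetP; exists x; rewrite // inE xA eqxx.
rewrite (eq_card (B := family (fun i => ffun_on (~: hit i)))); last first.
  by move=> F; rewrite inE avoidE; apply/forallP/familyP.
rewrite card_family foldrE big_map big_enum /=; apply: eq_bigr => i _.
by rewrite card_ffun_on card_ord -[in RHS](card_ord n) -(cardsC (hit i)) card_hit addKn.
Qed.

Lemma card_all_complete t :
  #|[set F : outcome t | all_complete s F]|%:R =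
  \sum_(A : {set coupons}) (-1) ^+ #|A| * #|[set F : outcome t | A \subset missed F]|%:R :> R.
Proof.
transitivity (\sum_(F : outcome t) \sum_(A : {set coupons} | A \subset missed F) (-1) ^+ #|A| : R).
  rewrite -sumr_const big_mkcond /=; apply: eq_bigr => F _.
  by rewrite sum_subset_sign inE all_completeE; case: (_ == _).
rewrite (exchange_big_dep xpredT) //=; apply: eq_bigr => A _.
by rewrite mulr_natr -sumr_const; apply: eq_bigl => F; rewrite inE.
Qed.

Lemma prob_max_leE t : (0 < n)%N ->
  prob_max_le R n s t = \sum_(A : {set coupons}) (-1) ^+ #|A| * miss_prob A ^+ t.
Proof.
move=> n_gt0.
rewrite /prob_max_le card_all_complete !card_ffun !card_ord mulr_suml; apply: eq_bigr => A _.
rewrite card_sup_missed -mulrA; congr (_ * _).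
have n_neq0 : n%:R != 0 :> R by rewrite pnatr_eq0 -lt0n.
rewrite /miss_prob -prodrXl natr_prod natrX -[X in _ ^+ X](card_ord k) -prodr_const.
rewrite -prodf_div; apply: eq_bigr => i _.
by rewrite !natrX -expr_div_n natrB ?card_fiber_le // mulrBl divff.
Qed.

Lemma miss_prob0 : miss_prob set0 = 1.
Proof. by rewrite /miss_prob big1 // => i _; rewrite card_fiber0 mul0r subr0. Qed.

Lemma miss_factor_itv (A : {set coupons}) i : (0 < n)%N ->
  0 <= 1 - (card_fiber tag A i)%:R / (n%:R : R) <= 1.
Proof.
move=> n_gt0; have fiber_le := card_fiber_le A i.
rewrite subr_ge0 lerBlDr lerDl divr_ge0 ?ler0n // andbT.
by rewrite ler_pdivrMr ?ltr0n // mul1r ler_nat.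
Qed.

Lemma miss_prob_ge0 A : (0 < n)%N -> 0 <= miss_prob A.
Proof. by move=> n_gt0; apply: prodr_ge0 => i _; case/andP: (miss_factor_itv A i n_gt0). Qed.

Lemma miss_prob_lt1 A : (0 < n)%N -> A != set0 -> miss_prob A < 1.
Proof.
move=> n_gt0 /set0Pn[x xA]; rewrite /miss_prob (bigD1 (tag x)) //=.
have fiber_gt0 : (0 < card_fiber tag A (tag x))%N.
  by apply/card_gt0P; exists x; rewrite !inE xA eqxx.
have factor_lt1 : 1 - (card_fiber tag A (tag x))%:R / n%:R < 1 :> R.
  by rewrite ltrBlDr ltrDl divr_gt0 ?ltr0n.
have /andP[factor_ge0 _] := miss_factor_itv A (tag x) n_gt0.
have rest_le1 : \prod_(i < k | i != tag x) (1 - (card_fiber tag A i)%:R / n%:R) <= 1 :> R.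
  by apply: prodr_ile1 => i _; apply: miss_factor_itv.
have rest_ge0 : 0 <= \prod_(i < k | i != tag x) (1 - (card_fiber tag A i)%:R / n%:R) :> R.
  by apply: prodr_ge0 => i _; case/andP: (miss_factor_itv A i n_gt0).
by apply: le_lt_trans factor_lt1; rewrite ler_piMr.
Qed.

Local Open Scope classical_set_scope.

(* The term A = set0 vanishes: 1 - miss_prob set0 = 0 and 0^-1 = 0. *)
Lemma expected_maxE : (0 < n)%N ->
  expected_max R n s = - \sum_(A : {set coupons}) (-1) ^+ #|A| / (1 - miss_prob A).
Proof.
move=> n_gt0; rewrite (bigD1 set0) //= miss_prob0 subrr invr0 mulr0 add0r.
have partial_sums N : \sum_(0 <= t < N) (1 - prob_max_le R n s t) =
    - \sum_(A : {set coupons} | A != set0) (-1) ^+ #|A| * \sum_(0 <= t < N) miss_prob A ^+ t.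
  under eq_bigr do rewrite prob_max_leE // (bigD1 set0) //= cards0 miss_prob0 expr1n mulr1
    opprD addNKr.
  by rewrite sumrN exchange_big /=; congr (- _); apply: eq_bigr => A _; rewrite mulr_sumr.
rewrite /expected_max (funext partial_sums); apply/cvg_lim => //; apply: cvgN.
apply: cvg_big => [|A A_neq0]; first exact: add_continuous.
apply: cvgM; first exact: cvg_cst.
have q_lt1 : `|miss_prob A| < 1 by rewrite ger0_norm ?miss_prob_ge0 ?miss_prob_lt1.
have := cvg_geometric_series q_lt1 (a := 1); rewrite mul1r; apply: cvg_trans.
by apply: near_eq_cvg; near=> N; apply: eq_bigr => t _; rewrite /geometric /= mul1r.
Unshelve. all: by end_near.
Qed.

End InclusionExclusion.

Arguments miss_prob R n {k s} A.
Arguments expected_maxE {R n k s} s_le.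

Section Asymptotics.
Variables (R : realType) (k : nat) (s : 'I_k -> nat).
Local Open Scope classical_set_scope.

Local Notation coupons := {i : 'I_k & 'I_(s i)}.
Local Notation S := (\sum_(i < k) s i)%N.

Definition remainder (n : nat) (A : {set coupons}) : R :=
  (1 - miss_prob R n A)^-1 - n%:R / #|A|%:R - #|cross_pairs tag A|%:R / #|A|%:R ^+ 2.

Lemma cvg_remainder A : remainder ^~ A @ \oo --> 0.
Proof.
have [-> | A_neq0] := eqVneq A set0.
  under eq_cvg do rewrite /remainder miss_prob0 subrr cards0 expr2 mulr0 !invr0 !mulr0 !subr0.
  exact: cvg_cst.
have sum_fiber_neq0 : \sum_(i < k) (card_fiber tag A i)%:R != 0 :> R.
  by rewrite sum_card_fiber pnatr_eq0 cards_eq0.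
have := cvgn_inv_one_sub_prod (fun i => (card_fiber tag A i)%:R) sum_fiber_neq0.
rewrite /esym2 sqr_sum_sub_sum_sqr -card_cross_pairs sum_card_fiber.
by rewrite [2 * _]mulrC mulfK ?pnatr_eq0.
Qed.

Lemma cvg_signed_sum_remainder :
  (fun n => \sum_(A : {set coupons}) (-1) ^+ #|A| * remainder n A) @ \oo --> 0.
Proof.
rewrite [X in _ --> X](_ : 0 = \sum_(A : {set coupons}) (-1) ^+ #|A| * 0); last first.
  by rewrite big1 // => A _; rewrite mulr0.
apply: cvg_big => [|A _]; first exact: add_continuous.
by apply: cvgM; [exact: cvg_cst | exact: cvg_remainder].
Qed.

Lemma expected_max_remainder n : (S < n)%N ->
  expected_max R n s
  - (n%:R * harmonicH R S
     - (harmonicH R S - 1) * (\sum_(i < k) \sum_(j < k | (i < j)%N) (s i * s j)%:R)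
       / (S%:R * (S%:R - 1)))
  = - \sum_(A : {set coupons}) (-1) ^+ #|A| * remainder n A.
Proof.
move=> S_lt_n; have n_gt0 : (0 < n)%N by apply: leq_ltn_trans S_lt_n.
have s_le i : (s i <= n)%N.
  by apply: leq_trans (ltnW S_lt_n); rewrite (bigD1 i) //= leq_addr.
have first_order : n%:R * harmonicH R S =
    - \sum_(A : {set coupons}) (-1) ^+ #|A| * (n%:R / #|A|%:R).
  rewrite -card_coupons -[harmonicH R _]opprK -sum_sign_inv_card mulrN mulr_sumr.
  by congr (- _); apply: eq_bigr => A _; rewrite mulrCA.
have second_order :
    (harmonicH R S - 1) * (\sum_(i < k) \sum_(j < k | (i < j)%N) (s i * s j)%:R)
      / (S%:R * (S%:R - 1)) =
    \sum_(A : {set coupons}) (-1) ^+ #|A| * (#|cross_pairs tag A|%:R / #|A|%:R ^+ 2).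
  have pairsT : \sum_(i < k) \sum_(j < k | (i < j)%N) (s i * s j)%:R =
      #|cross_pairs tag (setT : {set coupons})|%:R :> R.
    rewrite card_cross_pairs; apply: eq_bigr => i _; apply: eq_bigr => j _.
    by rewrite !card_fiber_tagT natrM.
  rewrite pairsT -card_coupons [_ * #|_|%:R]mulrC -mulrA.
  rewrite -(sum_sign_sqr_pairs (cross_pairs_neq tag)).
  by apply: eq_bigr => A _; rewrite -cross_pairsE mulrCA.
rewrite (expected_maxE s_le n_gt0) first_order second_order.
transitivity (- \sum_(A : {set coupons}) ((-1) ^+ #|A| / (1 - miss_prob R n A)
    - (-1) ^+ #|A| * (n%:R / #|A|%:R)
    - (-1) ^+ #|A| * (#|cross_pairs tag A|%:R / #|A|%:R ^+ 2))).
  by rewrite !sumrB; ring.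
by congr (- _); apply: eq_bigr => A _; rewrite /remainder !mulrBr.
Qed.

End Asymptotics.

Arguments remainder R {k s} n A.
Arguments expected_max_remainder {R k s} n.

Local Open Scope classical_set_scope.

Theorem mainTheorem2 (R : realType) (k : nat) (s : 'I_k -> nat) :
  (0 < k)%N ->
  let S := (\sum_(i < k) s i)%N in
  (fun n : nat =>
     expected_max R n s
     - (n%:R * harmonicH R S
        - (harmonicH R S - 1) * (\sum_(i < k) \sum_(j < k | (i < j)%N) (s i * s j)%:R)
          / (S%:R * (S%:R - 1))))
    @ \oo --> (0 : R).
Proof.
move=> _ S.
have lim : (fun n => - \sum_(A : {set {i : 'I_k & 'I_(s i)}}) (-1) ^+ #|A| * remainder R n A)
    @ \oo --> (0 : R).
  by rewrite -[X in _ --> X]oppr0; apply: cvgN; exact: cvg_signed_sum_remainder.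
apply: cvg_trans lim; apply: near_eq_cvg; near=> n.
by apply/esym/expected_max_remainder; near: n; exact: nbhs_infty_gt.
Unshelve. all: by end_near.
Qed.
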